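(* Let $\mathcal{D}=(\mathcal{P},\mathcal{L})$ be a $(G,2)$-point-transitive linear space, and let $\overline{\mathcal{D}}$ be its complement. Let $(\sigma,L)$ be an antiflag of $\mathcal{D}$ (so $\sigma\in\mathcal{P}\setminus L$, $L\in\mathcal{L}$) such that $\Omega=(\sigma,\mathcal{P}\setminus L)^G$ is a feasible $G$-orbit on the set of flags of $\overline{\mathcal{D}}$, and let $\Psi=((\sigma,\mathcal{P}\setminus L),(\tau,\mathcal{P}\setminus N))^G$ be a self-paired $G$-orbit on $\mathcal{C}(\overline{\mathcal{D}},\Omega)$. Then the $G$-flag graph $\Gamma=\Gamma(\overline{\mathcal{D}},\Omega,\Psi)$ has order $|\mathcal{P}|\cdot|L^{G_\sigma}|$ and valency $(|\mathcal{P}|-|L|-1)\cdot|N^{G_{\sigma,\tau,L}}|$. Moreover, there are exactly $|L^{G_{\sigma,\tau}}|$ vertices in $\Omega(\sigma)$ that have neighbours in $\Omega(\tau)$, and each of them has exactly $|N^{G_{\sigma,\tau,L}}|$ neighbours in $\Omega(\tau)$.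
   Context: All groups are finite. A linear space is an incidence structure of points and lines (lines identified with point sets) in which each line has at least two points and any two points lie on exactly one line; it is $(G,2)$-point-transitive if $G$ acts as automorphisms, 2-transitively on points. The complement $\overline{\mathcal{D}}$ has point set $\mathcal{P}$ and blocks $\mathcal{P}\setminus L$, $L\in\mathcal{L}$. A flag of a design is a pair (point, block containing it); an antiflag is a pair (point, block not containing it). For a $G$-orbit $\Omega$ on flags and a point $\sigma$, $\Omega(\sigma)$ is the set of flags in $\Omega$ with point-entry $\sigma$. $\Omega$ is feasible if $|\Omega(\sigma)|\ge2$ for some (hence all) point $\sigma$ and, for some (hence all) flag $(\sigma,M)\in\Omega$, $G_{\sigma,M}$ (setwise stabilizer of $M$ in $G_\sigma$) is transitive on $M\setminus\{\sigma\}$. $\mathcal{C}(\overline{\mathcal{D}},\Omega)=\{((\sigma,M),(\tau,M'))\in\Omega\times\Omega:\sigma\ne\tau,\ \sigma,\tau\in M\cap M'\}$. A $G$-orbit $\Psi$ on it is self-paired if $((\sigma,M),(\tau,M'))\in\Psi$ implies $((\tau,M'),(\sigma,M))\in\Psi$. The $G$-flag graph $\Gamma(\overline{\mathcal{D}},\Omega,\Psi)$ has vertex set $\Omega$, with two flags adjacent iff the ordered pair lies in $\Psi$. $G_{\sigma,\tau}=G_\sigma\cap G_\tau$, and $G_{\sigma,\tau,L}$ is the setwise stabilizer of $L$ in $G_{\sigma,\tau}$; $X^K$ denotes the orbit of $X$ under $K$. *)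

From mathcomp Require Import all_boot all_fingroup.
Set Implicit Arguments. Unset Strict Implicit. Unset Printing Implicit Defensive.

(* Points are the elements of a finite type T; lines are subsets of T;
   G is a group of permutations of the points. *)
Section Defs.
Variable T : finType.

Definition simage (g : {perm T}) (A : {set T}) : {set T} := [set g x | x in A].

Definition is_linear_space (Ls : {set {set T}}) : Prop :=
  (forall L, L \in Ls -> 2 <= #|L|) /\
  (forall x y, x != y -> exists! L, L \in Ls /\ x \in L /\ y \in L).

Definition acts_as_automorphisms (G : {set {perm T}}) (Ls : {set {set T}}) : Prop :=
  forall g L, g \in G -> L \in Ls -> simage g L \in Ls.

Definition two_transitive (G : {set {perm T}}) : Prop :=
  forall x y x' y', x != y -> x' != y' ->
    exists2 g, g \in G & g x = x' /\ g y = y'.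

Definition G2_point_transitive (G : {set {perm T}}) (Ls : {set {set T}}) : Prop :=
  [/\ is_linear_space Ls, acts_as_automorphisms G Ls & two_transitive G].

(* flags (point, block) ; blocks of the complement are ~: L *)
Definition flag := (T * {set T})%type.

Definition flag_act (g : {perm T}) (f : flag) : flag := (g f.1, simage g f.2).

Definition flag_orbit (G : {set {perm T}}) (f : flag) : {set flag} :=
  [set flag_act g f | g in G].

Definition Omega_at (Om : {set flag}) (s : T) : {set flag} :=
  [set f in Om | f.1 == s].

Definition pstab (H : {set {perm T}}) (s : T) : {set {perm T}} :=
  [set g in H | g s == s].
Definition setstab (H : {set {perm T}}) (A : {set T}) : {set {perm T}} :=
  [set g in H | simage g A == A].

Definition set_orbit (H : {set {perm T}}) (A : {set T}) : {set {set T}} :=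
  [set simage g A | g in H].

Definition feasible (G : {set {perm T}}) (Om : {set flag}) : Prop :=
  (exists s, 2 <= #|Omega_at Om s|) /\
  (exists f, f \in Om /\
     forall x y, x \in f.2 :\ f.1 -> y \in f.2 :\ f.1 ->
       exists2 g, g \in setstab (pstab G f.1) f.2 & g x = y).

Definition Cset (Om : {set flag}) : {set flag * flag} :=
  [set p : flag * flag | [&& p.1 \in Om, p.2 \in Om, p.1.1 != p.2.1,
                             p.1.1 \in p.1.2 :&: p.2.2 & p.2.1 \in p.1.2 :&: p.2.2]].

Definition pair_act (g : {perm T}) (p : flag * flag) : flag * flag :=
  (flag_act g p.1, flag_act g p.2).

Definition pair_orbit (G : {set {perm T}}) (p : flag * flag) : {set flag * flag} :=
  [set pair_act g p | g in G].

Definition self_paired (Psi : {set flag * flag}) : Prop :=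
  forall p, p \in Psi -> (p.2, p.1) \in Psi.

Definition nbhd (Om : {set flag}) (Psi : {set flag * flag}) (v : flag) : {set flag} :=
  [set w in Om | (v, w) \in Psi].

End Defs.

From mathcomp Require Import all_boot all_fingroup.
From mathcomp Require Import zify.
Set Implicit Arguments. Unset Strict Implicit. Unset Printing Implicit Defensive.

(* Every count is an orbit count. G permutes flags and pairs of flags, hence
   carries each fibre Omega(x) and each neighbourhood onto another one.
   Transitivity of G on points spreads Omega evenly over the points, and
   Omega(sigma) is the G_sigma-orbit of the base flag (sigma, P\L).
   Feasibility (transitivity of G_{sigma,P\L} on P\L\{sigma}) spreads the
   neighbourhood of the base flag evenly over the points of P\L other than
   sigma; its part over tau is the G_{sigma,tau,L}-orbit of (tau, P\N), and the
   flags of Omega(sigma) adjacent to Omega(tau) form the G_{sigma,tau}-orbit of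
   the base flag. *)

Lemma card_uniform_fibres (A B : finType) (f : A -> B) (S : {set A}) (X : {set B}) c :
  {in S, forall a, f a \in X} ->
  {in X, forall x, #|[set a in S | f a == x]| = c} -> #|S| = #|X| * c.
Proof.
move=> fSX fibre_c.
rewrite -sum1_card (partition_big f (mem X)) //= -sum_nat_const.
apply: eq_bigr => x xX; rewrite -(fibre_c x xX) sum1_card.
by apply: eq_card => a; rewrite !inE.
Qed.

Section PermActions.
Variable T : finType.
Implicit Types (g h : {perm T}) (A : {set T}) (H : {set {perm T}}) (f : flag T).

Lemma mem_simage g A x : (x \in simage g A) = (g^-1%g x \in A).
Proof.
apply/imsetP/idP => [[y yA ->]|xA]; first by rewrite permK.
by exists (g^-1%g x); rewrite ?permKV.
Qed.

Lemma mem_simage_perm g A x : (g x \in simage g A) = (x \in A).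
Proof. by rewrite mem_simage permK. Qed.

Lemma mem_simage_permD1 g A x y : (g x \in simage g A :\ g y) = (x \in A :\ y).
Proof. by rewrite !in_setD1 mem_simage_perm (inj_eq perm_inj). Qed.

Lemma simageM g h A : simage (g * h)%g A = simage h (simage g A).
Proof. by apply/setP => x; rewrite !mem_simage invMg permM. Qed.

Lemma simageK g : cancel (simage g) (simage g^-1%g).
Proof. by move=> A; apply/setP => x; rewrite !mem_simage invgK permK. Qed.

Lemma simageKV g : cancel (simage g^-1%g) (simage g).
Proof. by move=> A; apply/setP => x; rewrite !mem_simage invgK permKV. Qed.

Lemma simageC g A : simage g (~: A) = ~: simage g A.
Proof. by apply/setP => x; rewrite !inE !mem_simage inE. Qed.

Lemma flag_actM g h f : flag_act (g * h)%g f = flag_act h (flag_act g f).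
Proof. by rewrite /flag_act /= permM simageM. Qed.

Lemma flag_actK g : cancel (flag_act g) (flag_act g^-1%g).
Proof. by case=> x A; rewrite /flag_act /= permK simageK. Qed.

Lemma flag_actKV g : cancel (flag_act g^-1%g) (flag_act g).
Proof. by case=> x A; rewrite /flag_act /= permKV simageKV. Qed.

Lemma flag_act_inj g : injective (flag_act g).
Proof. exact: can_inj (flag_actK g). Qed.

Lemma pstab_fix H x : {in pstab H x, forall h, h x = x}.
Proof. by move=> h; rewrite inE => /andP[_ /eqP]. Qed.

Lemma pstab_sub H x : pstab H x \subset H.
Proof. by apply/subsetP => h; rewrite inE => /andP[]. Qed.

Lemma setstab_sub H A : setstab H A \subset H.
Proof. by apply/subsetP => h; rewrite inE => /andP[]. Qed.

Lemma setstabC H A : setstab H (~: A) = setstab H A.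
Proof. by apply/setP => h; rewrite !inE simageC (inj_eq (@setC_inj T)). Qed.

Lemma set_orbitC H A : set_orbit H (~: A) = [set ~: X | X in set_orbit H A].
Proof. by rewrite -imset_comp; apply: eq_imset => h; apply: simageC. Qed.

Lemma card_set_orbitC H A : #|set_orbit H (~: A)| = #|set_orbit H A|.
Proof. by rewrite set_orbitC card_imset //; apply: setC_inj. Qed.

Lemma card_flag_orbit_fixed H x A :
  {in H, forall h, h x = x} -> #|flag_orbit H (x, A)| = #|set_orbit H A|.
Proof.
move=> Hx; have -> : flag_orbit H (x, A) = [set (x, X) | X in set_orbit H A].
  by rewrite -imset_comp; apply: eq_in_imset => h hH; rewrite /flag_act /= Hx.
by rewrite card_imset // => X Y [].
Qed.

Definition flag_transitive H f : Prop :=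
  forall x y, x \in f.2 :\ f.1 -> y \in f.2 :\ f.1 ->
    exists2 g, g \in setstab (pstab H f.1) f.2 & g x = y.

End PermActions.

Section FlagOrbits.
Variables (T : finType) (G : {group {perm T}}).
Implicit Types (g h : {perm T}) (f v : flag T).

Lemma two_transitive_transitive y x :
  two_transitive G -> exists2 h, h \in G & h y = x.
Proof.
move=> G2; have [->|xy] := eqVneq x y; first by exists 1%g; rewrite ?perm1.
have yx : y != x by rewrite eq_sym.
by have [h hG [hy _]] := G2 y x x y yx xy; exists h.
Qed.

Lemma flag_transitive_act h f :
  h \in G -> flag_transitive G f -> flag_transitive G (flag_act h f).
Proof.
case: f => x A hG trA u w; rewrite -(permKV h u) -(permKV h w) /=.
rewrite !mem_simage_permD1 => uA wA.
have [k] := trA _ _ uA wA; rewrite !inE => /andP[/andP[kG /eqP kx] /eqP kA] kuw.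
exists (k ^ h)%g; last by rewrite permJ kuw.
by rewrite !inE groupJ //= permJ kx !simageM simageK kA !eqxx.
Qed.

Lemma flag_transitive_orbit f0 f :
  f \in flag_orbit G f0 -> flag_transitive G f -> flag_transitive G f0.
Proof.
case/imsetP=> g gG -> /(flag_transitive_act (groupVr gG)).
by rewrite flag_actK.
Qed.

Lemma mem_flag_orbit f0 g : g \in G -> flag_act g f0 \in flag_orbit G f0.
Proof. by move=> gG; apply/imsetP; exists g. Qed.

Lemma mem_pair_orbit p0 g : g \in G -> pair_act g p0 \in pair_orbit G p0.
Proof. by move=> gG; apply/imsetP; exists g. Qed.

Lemma flag_orbit_act f0 h f :
  h \in G -> f \in flag_orbit G f0 -> flag_act h f \in flag_orbit G f0.
Proof.
by move=> hG /imsetP[g gG ->]; rewrite -flag_actM mem_flag_orbit ?groupM.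
Qed.

Lemma pair_orbit_act p0 h v w :
  h \in G -> (v, w) \in pair_orbit G p0 ->
  (flag_act h v, flag_act h w) \in pair_orbit G p0.
Proof.
move=> hG /imsetP[g gG [-> ->]]; rewrite -!flag_actM.
exact: (mem_pair_orbit p0 (groupM gG hG)).
Qed.

Section FixedOrbits.
Variables (f0 : flag T) (p0 : flag T * flag T).
Local Notation Om := (flag_orbit G f0).
Local Notation Psi := (pair_orbit G p0).

Lemma Omega_at_act h y :
  h \in G -> Omega_at Om (h y) = flag_act h @: Omega_at Om y.
Proof.
move=> hG; apply/setP => w; rewrite !inE; apply/andP/imsetP.
- case=> wOm /eqP w1; exists (flag_act h^-1%g w); last by rewrite flag_actKV.
  by rewrite inE flag_orbit_act ?groupV //= w1 permK.
- case=> u; rewrite inE => /andP[uOm /eqP u1] ->.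
  by rewrite flag_orbit_act //= u1.
Qed.

Lemma nbhd_act h v : h \in G -> nbhd Om Psi (flag_act h v) = flag_act h @: nbhd Om Psi v.
Proof.
move=> hG; apply/setP => w; rewrite !inE; apply/andP/imsetP.
- case=> wOm vw; exists (flag_act h^-1%g w); last by rewrite flag_actKV.
  rewrite inE flag_orbit_act ?groupV //=.
  by have := pair_orbit_act (groupVr hG) vw; rewrite flag_actK.
- case=> u; rewrite inE => /andP[uOm vu] ->.
  by rewrite flag_orbit_act // pair_orbit_act.
Qed.

Lemma card_Omega_at_act h y : h \in G -> #|Omega_at Om (h y)| = #|Omega_at Om y|.
Proof. by move=> hG; rewrite Omega_at_act // card_imset //; apply: flag_act_inj. Qed.

Lemma card_nbhd_act h v : h \in G -> #|nbhd Om Psi (flag_act h v)| = #|nbhd Om Psi v|.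
Proof. by move=> hG; rewrite nbhd_act // card_imset //; apply: flag_act_inj. Qed.

Lemma card_nbhd_Omega_at_act h v y : h \in G ->
  #|nbhd Om Psi (flag_act h v) :&: Omega_at Om (h y)|
  = #|nbhd Om Psi v :&: Omega_at Om y|.
Proof.
move=> hG; rewrite nbhd_act // Omega_at_act // -imsetI; last first.
  by move=> ? ? _ _; apply: flag_act_inj.
by rewrite card_imset //; apply: flag_act_inj.
Qed.

Lemma card_flag_orbit y :
  (forall x, exists2 h, h \in G & h y = x) -> #|Om| = #|T| * #|Omega_at Om y|.
Proof.
move=> trG; rewrite -cardsT; apply: (card_uniform_fibres (f := fst)) => [w _|x _].
  by rewrite inE.
have [h hG <-] := trG x; rewrite -(card_Omega_at_act y hG).
by apply: eq_card => w; rewrite !inE.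
Qed.

End FixedOrbits.

Section BaseFlags.
Variables (s t : T) (B C : {set T}).
Local Notation Om := (flag_orbit G (s, B)).
Local Notation Psi := (pair_orbit G ((s, B), (t, C))).

Lemma Omega_at_base : Omega_at Om s = flag_orbit (pstab G s) (s, B).
Proof.
apply/setP => w; rewrite inE; apply/andP/imsetP.
- case=> /imsetP[g gG ->] /= /eqP gs.
  by exists g; rewrite // inE gG gs eqxx.
- case=> g; rewrite inE => /andP[gG /eqP gs] ->.
  by rewrite mem_flag_orbit //= gs.
Qed.

Lemma adjacent_Omega_at_base : (t, C) \in Om ->
  [set v in Omega_at Om s | [exists w in Omega_at Om t, (v, w) \in Psi]]
  = flag_orbit (pstab (pstab G s) t) (s, B).
Proof.
move=> tCOm; apply/setP => v; rewrite !inE; apply/andP/imsetP.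
- case=> /andP[_ /eqP v1] /existsP[w /andP[]].
  rewrite inE => /andP[_ /eqP w1] /imsetP[g gG [vE wE]].
  exists g => //; move: v1 w1; rewrite vE wE /= => gs gt.
  by rewrite !inE gG gs gt !eqxx.
- case=> g; rewrite !inE => /andP[/andP[gG /eqP gs] /eqP gt] ->.
  rewrite mem_flag_orbit //= gs eqxx; split => //; apply/existsP.
  exists (flag_act g (t, C)); rewrite !inE flag_orbit_act //= gt eqxx.
  exact: (mem_pair_orbit ((s, B), (t, C)) gG).
Qed.

Lemma nbhd_Omega_at_base : (t, C) \in Om ->
  nbhd Om Psi (s, B) :&: Omega_at Om t
  = flag_orbit (setstab (pstab (pstab G s) t) B) (t, C).
Proof.
move=> tCOm; apply/setP => w; rewrite !inE; apply/andP/imsetP.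
- case=> /andP[_ /imsetP[g gG [gs gB wE]]] /andP[_ /eqP w1].
  exists g => //; move: w1; rewrite wE /= => gt.
  by rewrite !inE gG -gs -gB gt !eqxx.
- case=> g; rewrite !inE => /andP[/andP[/andP[gG /eqP gs] /eqP gt] /eqP gB] ->.
  rewrite flag_orbit_act //= gt eqxx; split => //; apply/imsetP; exists g => //.
  by rewrite /pair_act /flag_act /= gs gB.
Qed.

Lemma card_nbhd_base : flag_transitive G (s, B) -> t \in B :\ s ->
  #|nbhd Om Psi (s, B)| = #|B :\ s| * #|nbhd Om Psi (s, B) :&: Omega_at Om t|.
Proof.
move=> trB tB; apply: (card_uniform_fibres (f := fst)) => [w|x xB].
  rewrite inE => /andP[_ /imsetP[g gG [gs gB ->]]].
  by rewrite /= [in B :\ s]gs gB mem_simage_permD1.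
have [k] := trB _ _ tB xB; rewrite !inE /= => /andP[/andP[kG /eqP ks] /eqP kB] kt.
have kfix : flag_act k (s, B) = (s, B) by rewrite /flag_act /= ks kB.
rewrite -kt -(card_nbhd_Omega_at_act _ _ _ _ kG) kfix.
by apply: eq_card => w; rewrite !inE; case: (w \in Om).
Qed.

End BaseFlags.
End FlagOrbits.

Theorem lemma2p3 (T : finType) (G : {group {perm T}}) (Ls : {set {set T}})
    (s t : T) (L N : {set T}) :
  G2_point_transitive G Ls ->
  L \in Ls -> s \notin L ->
  feasible G (flag_orbit G (s, ~: L)) ->
  N \in Ls ->
  ((s, ~: L), (t, ~: N)) \in Cset (flag_orbit G (s, ~: L)) ->
  self_paired (pair_orbit G ((s, ~: L), (t, ~: N))) ->
  let Om := flag_orbit G (s, ~: L) in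
  let Psi := pair_orbit G ((s, ~: L), (t, ~: N)) in
  [/\ #|Om| = #|T| * #|set_orbit (pstab G s) L|,
      forall v, v \in Om ->
        #|nbhd Om Psi v|
          = (#|T| - #|L| - 1) * #|set_orbit (setstab (pstab (pstab G s) t) L) N|,
      #|[set v in Omega_at Om s | [exists w in Omega_at Om t, (v, w) \in Psi]]|
          = #|set_orbit (pstab (pstab G s) t) L|
    & forall v, v \in Omega_at Om s ->
        [exists w in Omega_at Om t, (v, w) \in Psi] ->
        #|nbhd Om Psi v :&: Omega_at Om t|
          = #|set_orbit (setstab (pstab (pstab G s) t) L) N| ].
Proof.
move=> [_ _ G2] _ sL [_ [f0 [f0Om trf0]]] _ Cst _ Om Psi.
rewrite inE in Cst; case/and5P: Cst => /= _ tNOm st _ /setIP[tL _].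
have tLs : t \in ~: L :\ s by rewrite in_setD1 eq_sym st.
have trL : flag_transitive G (s, ~: L) := flag_transitive_orbit f0Om trf0.
have cardLs : #|~: L :\ s| = #|T| - #|L| - 1.
  by have := cardsC L; have := cardsD1 s (~: L); rewrite in_setC sL; lia.
have cardNt : #|nbhd Om Psi (s, ~: L) :&: Omega_at Om t|
              = #|set_orbit (setstab (pstab (pstab G s) t) L) N|.
  rewrite nbhd_Omega_at_base // card_flag_orbit_fixed ?setstabC ?card_set_orbitC //.
  by move=> h /(subsetP (setstab_sub _ _)) /pstab_fix.
rewrite {}/Om {}/Psi in cardNt *; split.
- rewrite (card_flag_orbit _ (fun x => two_transitive_transitive s x G2)).
  by rewrite Omega_at_base card_flag_orbit_fixed ?card_set_orbitC //; apply: pstab_fix.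
- move=> _ /imsetP[g gG ->].
  by rewrite card_nbhd_act // card_nbhd_base // cardLs cardNt.
- rewrite adjacent_Omega_at_base // card_flag_orbit_fixed ?card_set_orbitC //.
  by move=> h /(subsetP (pstab_sub _ _)) /pstab_fix.
- move=> v vs vadj; have := adjacent_Omega_at_base tNOm.
  move/setP/(_ v); rewrite inE vs vadj => /esym /imsetP[h hst ->].
  have hG : h \in G by move: hst; rewrite !inE => /andP[/andP[]].
  by rewrite -{2}(pstab_fix hst) card_nbhd_Omega_at_act.
Qed.
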